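(* Let $R$ be a regular run and let $0\le\alpha<\beta$ be reals with $\alpha+d_{open}<\beta-\Delta_{close}$. If TrackStatus$(x)\neq$ incrossing over the open interval $(\alpha,\beta)$ for every track $x$, then GateStatus = opened over $[\alpha+d_{open},\,\beta-\Delta_{close}]$.
   Context: Setting (evolving algebra for the railroad crossing). States are structures over a vocabulary containing: a finite universe Tracks; the reals and ExtendedReals $=\mathbb{R}\cup\{\infty\}$ with standard $<$ and $+$ ($\infty$ largest); a nullary real-valued symbol $\mathrm{CT}$ (current time); positive real constants $d_{close},d_{open},d_{min},d_{max}$ with $d_{close}<d_{min}\le d_{max}$; a unary function TrackStatus from Tracks to $\{\text{empty},\text{coming},\text{incrossing}\}$; a unary function Deadline from Tracks to ExtendedReals; a nullary Dir with values in $\{\text{open},\text{close}\}$; a nullary GateStatus with values in $\{\text{opened},\text{closed}\}$. Put $W=d_{min}-d_{close}$ and $\Delta_{close}=d_{close}+(d_{max}-d_{min})=d_{max}-W$. For a track $x$, $s(x)$ is the condition [$\mathrm{TrackStatus}(x)=\text{empty}$ or $\mathrm{CT}+d_{open}<\mathrm{Deadline}(x)$], and SafeToOpen is $\forall x\in\mathrm{Tracks}\ s(x)$. The program has two modules (agents). Gate: simultaneously OpenGate ''if Dir=open then GateStatus:=opened'' and CloseGate ''if Dir=close then GateStatus:=closed''. Controller: simultaneously, for every track $x$, SetDeadline$(x)$ ''if TrackStatus$(x)$=coming and Deadline$(x)=\infty$ then Deadline$(x):=\mathrm{CT}+W$'', SignalClose$(x)$ ''if $\mathrm{CT}=$Deadline$(x)$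 then Dir:=close'', ClearDeadline$(x)$ ''if TrackStatus$(x)$=empty and Deadline$(x)<\infty$ then Deadline$(x):=\infty$'', together with SignalOpen ''if Dir=close and SafeToOpen then Dir:=open''. Executing a module means computing all updates it generates in the current state and performing them simultaneously (nothing happens if the update set is inconsistent). A module is enabled at a state if its update set is consistent and contains an update that changes the state. TrackStatus is external (changed only by the environment); Deadline, Dir, GateStatus are internal (changed only by the modules); other symbols are static. Runs: for $t\mapsto R(t)$, $t\in[0,\infty)$, let $\rho(t)$ be the reduct of $R(t)$ without CT. $R$ is a pre-run if all $R(t)$ share a superuniverse, $\mathrm{CT}=t$ in $R(t)$, and for every $\tau>0$ there are $0=t_0<\dots<t_n=\tau$ with $\rho$ constant on each $(t_i,t_{i+1})$. For a term $e$ (free variables fixed), $e_t$ is its value in $R(t)$, $e_{t+}$ (resp. $e_{t-}$, $t>0$) its constant value on some $(t,t+\epsilon)$ (resp. $(t-\epsilon,t)$); likewise $\rho(t\pm)$. $e$ holds over an interval if it holds at each point; $e$ becomes (is set to) $a$ at $t$ if $e_{t-}\ne a=e_t$ or $e_t\neq a=e_{t+}$. A pre-run is a run if (i) whenever $\rho(t+)\neq\rho(t)$, $\rho(t+)$ is the CT-free reduct of the result of executing some modules at $R(t)$ (these agents fire at $t$), with external functions equal in $\rho(t)$ and $\rho(t+)$; (ii) whenever $t>0$ and $\rho(t)\ne\rho(t-)$, they differ only in external functions. An agent is immediate if it fires at every moment it is enabled; bounded if immediate or there is $b>0$ with no interval $(t,t+b)$ over which it is enabled but never fires. Initial states: TrackStatus$(x)$=empty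 and Deadline$(x)=\infty$ for every track $x$. A regular run is a run $R$ with $R(0)$ initial such that: (Train Motion) for each track $x$ there is a finite or infinite sequence $0=t_0<t_1<t_2<\cdots$ (the significant moments of $x$) with TrackStatus$(x)$=empty over each $[t_{3i},t_{3i+1})$, =coming over each $[t_{3i+1},t_{3i+2})$ where $d_{min}\le t_{3i+2}-t_{3i+1}\le d_{max}$, =incrossing over each $[t_{3i+2},t_{3i+3})$, and, if the sequence is finite with last element $t_k$, then $3\mid k$ and TrackStatus$(x)$=empty over $[t_k,\infty)$; (Controller Timing) Controller is immediate; (Gate Timing) Gate is bounded, there is no interval $(t,t+d_{close})$ over which Dir=close and GateStatus=opened both hold, and no interval $(t,t+d_{open})$ over which Dir=open and GateStatus=closed both hold. *)

From Stdlib Require Import Reals Lra List.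
Open Scope R_scope.

Inductive TStatus := empty | coming | incrossing.
Inductive DirV := DOpen | DClose.
Inductive GStatus := opened | closed.

Inductive ExtR := Fin (r : R) | Inf.
Definition ext_lt (a b : ExtR) : Prop :=
  match a, b with
  | Fin x, Fin y => x < y
  | Fin _, Inf => True
  | Inf, _ => False
  end.

Definition finite_universe (T : Type) : Prop := exists l : list T, forall x, In x l.

(* CT-free reduct of a state: internal/external dynamic functions
   (all static symbols are fixed parameters) *)
Record State (T : Type) := mkState {
  TrackStatus : T -> TStatus;
  Deadline : T -> ExtR;
  Dir : DirV;
  GateStatus : GStatus }.
Arguments mkState {T}.
Arguments TrackStatus {T}.
Arguments Deadline {T}.
Arguments Dir {T}.
Arguments GateStatus {T}.

Inductive Agent := Gate | Controller.

Section RR.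
Context {T : Type} (dclose dopen dmin dmax : R).

Definition W : R := dmin - dclose.
Definition Delta_close : R := dclose + (dmax - dmin).

(* s(x) and SafeToOpen at a state with CT = t *)
Definition s_cond (t : R) (st : State T) (x : T) : Prop :=
  TrackStatus st x = empty \/ ext_lt (Fin (t + dopen)) (Deadline st x).
Definition SafeToOpen (t : R) (st : State T) : Prop := forall x, s_cond t st x.

Inductive Update := UDeadline (x : T) (v : ExtR) | UDir (d : DirV) | UGate (g : GStatus).
Definition UpdSet := Update -> Prop.

Definition gate_updates (st : State T) : UpdSet := fun u =>
  (Dir st = DOpen /\ u = UGate opened)
  \/ (Dir st = DClose /\ u = UGate closed).

Definition ctrl_updates (t : R) (st : State T) : UpdSet := fun u =>
  (exists x, TrackStatus st x = coming /\ Deadline st x = Inf /\ u = UDeadline x (Fin (t + W)))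
  \/ (exists x, Deadline st x = Fin t /\ u = UDir DClose)
  \/ (exists x, TrackStatus st x = empty /\ ext_lt (Deadline st x) Inf /\ u = UDeadline x Inf)
  \/ (Dir st = DClose /\ SafeToOpen t st /\ u = UDir DOpen).

Definition updates_of (a : Agent) (t : R) (st : State T) : UpdSet :=
  match a with Gate => gate_updates st | Controller => ctrl_updates t st end.

Definition consistent (U : UpdSet) : Prop :=
  (forall x v v', U (UDeadline x v) -> U (UDeadline x v') -> v = v')
  /\ (forall d d', U (UDir d) -> U (UDir d') -> d = d')
  /\ (forall g g', U (UGate g) -> U (UGate g') -> g = g').

Definition result (U : UpdSet) (st st' : State T) : Prop :=
  (consistent U ->
     TrackStatus st' = TrackStatus st
     /\ (forall x, (forall v, U (UDeadline x v) -> Deadline st' x = v)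
                   /\ ((forall v, ~ U (UDeadline x v)) -> Deadline st' x = Deadline st x))
     /\ (forall d, U (UDir d) -> Dir st' = d)
     /\ ((forall d, ~ U (UDir d)) -> Dir st' = Dir st)
     /\ (forall g, U (UGate g) -> GateStatus st' = g)
     /\ ((forall g, ~ U (UGate g)) -> GateStatus st' = GateStatus st))
  /\ (~ consistent U -> st' = st).

Definition changes (U : UpdSet) (st : State T) : Prop :=
  exists u, U u /\
    match u with
    | UDeadline x v => Deadline st x <> v
    | UDir d => Dir st <> d
    | UGate g => GateStatus st <> g
    end.

Definition enabled (a : Agent) (t : R) (st : State T) : Prop :=
  consistent (updates_of a t st) /\ changes (updates_of a t st) st.

Definition combined (F : Agent -> Prop) (t : R) (st : State T) : UpdSet :=
  fun u => exists a, F a /\ updates_of a t st u.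

(* rho t is the CT-free reduct of R(t) (CT = t); fires t a : agent a fires at t *)
Definition right_lim (rho : R -> State T) (t : R) (st : State T) : Prop :=
  exists eps, 0 < eps /\ forall u, t < u < t + eps -> rho u = st.
Definition left_lim (rho : R -> State T) (t : R) (st : State T) : Prop :=
  exists eps, 0 < eps /\ forall u, t - eps < u < t -> rho u = st.

Definition pre_run (rho : R -> State T) : Prop :=
  forall tau, 0 < tau ->
    exists (n : nat) (ts : nat -> R),
      ts 0%nat = 0 /\ ts n = tau
      /\ (forall i, (i < n)%nat -> ts i < ts (S i))
      /\ (forall i, (i < n)%nat -> forall u v,
            ts i < u < ts (S i) -> ts i < v < ts (S i) -> rho u = rho v).

Definition is_run (rho : R -> State T) (fires : R -> Agent -> Prop) : Prop :=
  pre_run rho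
  /\ (forall t, 0 <= t -> forall st, right_lim rho t st ->
        (st <> rho t ->
           result (combined (fires t) t (rho t)) (rho t) st
           /\ TrackStatus st = TrackStatus (rho t))
        /\ (st = rho t -> forall a, ~ fires t a))
  /\ (forall t, 0 < t -> forall st, left_lim rho t st -> rho t <> st ->
        Deadline (rho t) = Deadline st /\ Dir (rho t) = Dir st
        /\ GateStatus (rho t) = GateStatus st).

Definition immediate (rho : R -> State T) (fires : R -> Agent -> Prop) (a : Agent) : Prop :=
  forall t, 0 <= t -> enabled a t (rho t) -> fires t a.

Definition bounded (rho : R -> State T) (fires : R -> Agent -> Prop) (a : Agent) : Prop :=
  immediate rho fires a
  \/ exists b, 0 < b /\
       ~ (exists t, 0 <= t
            /\ (forall u, t < u < t + b -> enabled a u (rho u))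
            /\ (forall u, t < u < t + b -> ~ fires u a)).

Definition initial (st : State T) : Prop :=
  forall x, TrackStatus st x = empty /\ Deadline st x = Inf.

(* significant moments: ts 0, ts 1, ...; len = None (infinite) or Some k (last index k) *)
Definition train_motion (rho : R -> State T) (x : T) : Prop :=
  exists (ts : nat -> R) (len : option nat),
    let inr := fun i : nat => match len with None => True | Some k => (i <= k)%nat end in
    ts 0%nat = 0
    /\ (forall i, inr (S i) -> ts i < ts (S i))
    /\ (forall i, inr (3 * i + 1)%nat ->
          forall t, ts (3 * i)%nat <= t < ts (3 * i + 1)%nat -> TrackStatus (rho t) x = empty)
    /\ (forall i, inr (3 * i + 2)%nat ->
          (forall t, ts (3 * i + 1)%nat <= t < ts (3 * i + 2)%nat -> TrackStatus (rho t) x = coming)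
          /\ dmin <= ts (3 * i + 2)%nat - ts (3 * i + 1)%nat <= dmax)
    /\ (forall i, inr (3 * i + 3)%nat ->
          forall t, ts (3 * i + 2)%nat <= t < ts (3 * i + 3)%nat -> TrackStatus (rho t) x = incrossing)
    /\ (forall k, len = Some k ->
          (exists m, k = (3 * m)%nat) /\ forall t, ts k <= t -> TrackStatus (rho t) x = empty).

Definition regular_run (rho : R -> State T) (fires : R -> Agent -> Prop) : Prop :=
  is_run rho fires
  /\ initial (rho 0)
  /\ (forall x, train_motion rho x)
  /\ immediate rho fires Controller
  /\ bounded rho fires Gate
  /\ ~ (exists t, 0 <= t /\ forall u, t < u < t + dclose ->
          Dir (rho u) = DClose /\ GateStatus (rho u) = opened)
  /\ ~ (exists t, 0 <= t /\ forall u, t < u < t + dopen ->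
          Dir (rho u) = DOpen /\ GateStatus (rho u) = closed).

End RR.

(* By induction along the run, the Controller keeps Deadline(x) = infinity except
   between the arrival of a train on x and its exit, where Deadline(x) = arrival + W.  A train
   holding a deadline at some time of (alpha, beta) does not cross before beta, so it entered at
   most dmax after its arrival and its deadline is at least beta - dmax + W = beta - Delta_close.
   Hence SignalClose cannot fire in (alpha, beta - Delta_close), while SafeToOpen holds just after
   alpha, where the immediate Controller therefore sets Dir to open; so Dir = open on
   (alpha, beta - Delta_close].  The gate cannot stay closed for d_open while Dir = open, so it is
   opened at some moment of (alpha, alpha + d_open), and only CloseGate, which needs Dir = close,
   could close it again. *)

From Stdlib Require Import Reals Lra Lia List Classical.
Open Scope R_scope.

Lemma exists_pos_le_min (a b : R) : 0 < a -> 0 < b -> exists e, 0 < e /\ e <= a /\ e <= b.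
Proof.
  intros Ha Hb. exists (Rmin a b).
  split; [apply Rmin_glb_lt; assumption|split; [apply Rmin_l|apply Rmin_r]].
Qed.

Lemma interval_induction (Q : R -> Prop) (a b : R) :
  a <= b -> Q a ->
  (forall t, a <= t < b -> Q t -> exists e, 0 < e /\ forall u, t < u < t + e -> Q u) ->
  (forall t, a < t <= b -> (forall u, a <= u < t -> Q u) -> Q t) ->
  forall t, a <= t <= b -> Q t.
Proof.
  intros Hab Qa Hright Hleft.
  set (S := fun t => a <= t <= b /\ forall u, a <= u <= t -> Q u).
  assert (Sa : S a).
  { split; [lra|]. intros u Hu. replace u with a by lra. exact Qa. }
  assert (HS : bound S) by (exists b; intros y [Hy _]; lra).
  destruct (completeness S HS (ex_intro _ a Sa)) as [s [Hub Hlub]].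
  assert (Has : a <= s) by exact (Hub a Sa).
  assert (Hsb : s <= b) by (apply Hlub; intros y [Hy _]; lra).
  assert (Hbelow : forall u, a <= u < s -> Q u).
  { intros u Hu. apply NNPP; intro HQ.
    enough (s <= u) by lra. apply Hlub. intros y [_ Hy].
    apply Rnot_lt_le; intro Hyu. apply HQ, Hy; lra. }
  assert (Qs : Q s).
  { destruct (Req_dec s a) as [->|]; [exact Qa|]. apply Hleft; [lra|exact Hbelow]. }
  assert (Hs : s = b).
  { apply NNPP; intro Hsb'.
    destruct (Hright s) as [e [He Hnext]]; [lra|exact Qs|].
    destruct (exists_pos_le_min e (b - s) He ltac:(lra)) as (e' & He' & He'1 & He'2).
    enough (Hs' : S (s + e' / 2)) by (pose proof (Hub _ Hs'); lra).
    split; [lra|]. intros u Hu.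
    destruct (Rtotal_order u s) as [Hlt|[->|Hgt]];
      [apply Hbelow; lra|exact Qs|apply Hnext; lra]. }
  intros t Ht. destruct (Req_dec t s) as [->|]; [exact Qs|]. apply Hbelow; lra.
Qed.

Lemma exists_not_In_between (l : list R) (a b : R) :
  a < b -> exists u, a < u < b /\ ~ In u l.
Proof.
  revert a b; induction l as [|r l IH]; intros a b Hab.
  - exists ((a + b) / 2); split; [lra|intros []].
  - destruct (Rle_or_lt r ((a + b) / 2)).
    + destruct (IH ((a + b) / 2) b) as [u [Hu Hn]]; [lra|].
      exists u; split; [lra|]. intros [->|Hi]; [lra|auto].
    + destruct (IH a ((a + b) / 2)) as [u [Hu Hn]]; [lra|].
      exists u; split; [lra|]. intros [->|Hi]; [lra|auto].
Qed.

Lemma exists_between_max (a c b : R) : a < b -> c < b -> exists v, a < v < b /\ c < v.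
Proof.
  intros Hab Hcb. exists ((Rmax a c + b) / 2).
  pose proof (Rmax_l a c). pose proof (Rmax_r a c).
  pose proof (Rmax_lub_lt a c b Hab Hcb). lra.
Qed.

Lemma seq_bracket_le_lt (ts : nat -> R) (x : R) (m : nat) :
  ts 0%nat <= x < ts m -> exists i, (i < m)%nat /\ ts i <= x < ts (S i).
Proof.
  intros [H0 Hm]; induction m as [|m IH]; [lra|].
  destruct (Rlt_or_le x (ts m)) as [Hx|Hx].
  - destruct (IH Hx) as [i [Hi Hi2]]; exists i; split; [lia|exact Hi2].
  - exists m; split; [lia|lra].
Qed.

Lemma seq_bracket_lt_le (ts : nat -> R) (x : R) (m : nat) :
  ts 0%nat < x <= ts m -> exists i, (i < m)%nat /\ ts i < x <= ts (S i).
Proof.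
  intros [H0 Hm]; induction m as [|m IH]; [lra|].
  destruct (Rle_or_lt x (ts m)) as [Hx|Hx].
  - destruct (IH Hx) as [i [Hi Hi2]]; exists i; split; [lia|exact Hi2].
  - exists m; split; [lia|lra].
Qed.

Section PreRun.
Context {T : Type} (rho : R -> State T) (Hpre : pre_run rho).

Lemma pre_run_right_lim (t : R) : 0 <= t -> exists st, right_lim rho t st.
Proof.
  intros Ht. destruct (Hpre (t + 1)) as (n & ts & H0 & Hn & _ & Hconst); [lra|].
  destruct (seq_bracket_le_lt ts t n) as [i [Hi Hti]]; [lra|].
  exists (rho ((t + ts (S i)) / 2)), (ts (S i) - t); split; [lra|].
  intros u Hu. apply (Hconst i Hi); lra.
Qed.

Lemma pre_run_left_lim (t : R) : 0 < t -> exists st, left_lim rho t st.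
Proof.
  intros Ht. destruct (Hpre (t + 1)) as (n & ts & H0 & Hn & _ & Hconst); [lra|].
  destruct (seq_bracket_lt_le ts t n) as [i [Hi Hti]]; [lra|].
  exists (rho ((t + ts i) / 2)), (t - ts i); split; [lra|].
  intros u Hu. apply (Hconst i Hi); lra.
Qed.

End PreRun.

Section Updates.
Context {T : Type} (dclose dopen dmin : R) (F : Agent -> Prop) (t : R) (st : State T).

Lemma combined_deadline_update y v :
  combined dclose dopen dmin F t st (UDeadline y v) ->
  (v = Fin (t + W dclose dmin) /\ TrackStatus st y = coming /\ Deadline st y = Inf)
  \/ v = Inf.
Proof.
  intros [[] [_ Hu]]; simpl in Hu.
  - destruct Hu as [[_ E]|[_ E]]; discriminate.
  - destruct Hu as [(z & Hc & Hinf & E)|[(z & _ & E)|[(z & _ & _ & E)|(_ & _ & E)]]];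
      inversion E; subst; auto.
Qed.

Lemma combined_dir_update d :
  combined dclose dopen dmin F t st (UDir d) -> d = DOpen \/ exists y, Deadline st y = Fin t.
Proof.
  intros [[] [_ Hu]]; simpl in Hu.
  - destruct Hu as [[_ E]|[_ E]]; discriminate.
  - destruct Hu as [(z & _ & _ & E)|[(z & Hdue & E)|[(z & _ & _ & E)|(_ & _ & E)]]];
      inversion E; subst; eauto.
Qed.

Lemma combined_gate_update g :
  combined dclose dopen dmin F t st (UGate g) ->
  (Dir st = DOpen /\ g = opened) \/ (Dir st = DClose /\ g = closed).
Proof.
  intros [[] [_ Hu]]; simpl in Hu.
  - destruct Hu as [[Hd E]|[Hd E]]; inversion E; auto.
  - destruct Hu as [(z & _ & _ & E)|[(z & _ & E)|[(z & _ & _ & E)|(_ & _ & E)]]];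
      discriminate.
Qed.

End Updates.

Section Result.
Context {T : Type} (U : @UpdSet T) (st st' : State T) (HU : consistent U) (Hres : result U st st').

Lemma result_deadline y :
  Deadline st' y = Deadline st y \/ exists v, U (UDeadline y v) /\ Deadline st' y = v.
Proof.
  destruct (proj1 Hres HU) as (_ & HD & _).
  destruct (classic (exists v, U (UDeadline y v))) as [[v Hv]|Hn].
  - right. exists v. split; [exact Hv|]. exact (proj1 (HD y) v Hv).
  - left. apply (proj2 (HD y)). intros v Hv. exact (Hn (ex_intro _ v Hv)).
Qed.

Lemma result_dir : Dir st' = Dir st \/ exists d, U (UDir d) /\ Dir st' = d.
Proof.
  destruct (proj1 Hres HU) as (_ & _ & HD1 & HD2 & _).
  destruct (classic (exists d, U (UDir d))) as [[d Hd]|Hn].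
  - right. exists d. split; [exact Hd|]. exact (HD1 d Hd).
  - left. apply HD2. intros d Hd. exact (Hn (ex_intro _ d Hd)).
Qed.

Lemma result_gate : GateStatus st' = GateStatus st \/ exists g, U (UGate g) /\ GateStatus st' = g.
Proof.
  destruct (proj1 Hres HU) as (_ & _ & _ & _ & HG1 & HG2).
  destruct (classic (exists g, U (UGate g))) as [[g Hg]|Hn].
  - right. exists g. split; [exact Hg|]. exact (HG1 g Hg).
  - left. apply HG2. intros g Hg. exact (Hn (ex_intro _ g Hg)).
Qed.

End Result.

Section Run.
Context {T : Type} (dclose dopen dmin : R) (rho : R -> State T) (fires : R -> Agent -> Prop)
  (Hrun : is_run dclose dopen dmin rho fires).

Lemma run_right_lim_result t st : 0 <= t -> right_lim rho t st ->
  st = rho t \/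
  (consistent (combined dclose dopen dmin (fires t) t (rho t))
   /\ result (combined dclose dopen dmin (fires t) t (rho t)) (rho t) st).
Proof.
  intros Ht Hlim. destruct (classic (st = rho t)) as [E|Hne]; [left; exact E|right].
  destruct Hrun as (_ & Hright & _).
  destruct (proj1 (Hright t Ht st Hlim) Hne) as [Hres _].
  split; [|exact Hres].
  apply NNPP; intro HC. exact (Hne (proj2 Hres HC)).
Qed.

Lemma deadline_step t st y : 0 <= t -> right_lim rho t st ->
  Deadline st y = Deadline (rho t) y
  \/ (Deadline st y = Fin (t + W dclose dmin)
      /\ TrackStatus (rho t) y = coming /\ Deadline (rho t) y = Inf)
  \/ Deadline st y = Inf.
Proof.
  intros Ht Hlim.
  destruct (run_right_lim_result t st Ht Hlim) as [->|[HC Hres]]; [left; reflexivity|].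
  destruct (result_deadline _ _ _ HC Hres y) as [E|(v & Hv & ->)]; [left; exact E|right].
  exact (combined_deadline_update _ _ _ _ _ _ _ _ Hv).
Qed.

Lemma dir_step t st : 0 <= t -> right_lim rho t st ->
  Dir st = Dir (rho t) \/ Dir st = DOpen \/ exists y, Deadline (rho t) y = Fin t.
Proof.
  intros Ht Hlim.
  destruct (run_right_lim_result t st Ht Hlim) as [->|[HC Hres]]; [left; reflexivity|].
  destruct (result_dir _ _ _ HC Hres) as [E|(d & Hd & ->)]; [left; exact E|right].
  exact (combined_dir_update _ _ _ _ _ _ _ Hd).
Qed.

Lemma gate_step t st : 0 <= t -> right_lim rho t st ->
  GateStatus st = GateStatus (rho t)
  \/ (Dir (rho t) = DOpen /\ GateStatus st = opened)
  \/ (Dir (rho t) = DClose /\ GateStatus st = closed).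
Proof.
  intros Ht Hlim.
  destruct (run_right_lim_result t st Ht Hlim) as [->|[HC Hres]]; [left; reflexivity|].
  destruct (result_gate _ _ _ HC Hres) as [E|(g & Hg & ->)]; [left; exact E|right].
  exact (combined_gate_update _ _ _ _ _ _ _ Hg).
Qed.

Lemma run_internal_left_point a t : 0 < t -> a < t ->
  exists v, a < v < t /\ Deadline (rho v) = Deadline (rho t)
            /\ Dir (rho v) = Dir (rho t) /\ GateStatus (rho v) = GateStatus (rho t).
Proof.
  intros Ht Hat. destruct Hrun as (Hpre & _ & Hleft).
  destruct (pre_run_left_lim rho Hpre t Ht) as (st & eps & He & Hst).
  destruct (exists_between_max a (t - eps) t Hat ltac:(lra)) as (v & Hv & Hve).
  exists v. split; [exact Hv|]. rewrite (Hst v ltac:(lra)).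
  destruct (classic (rho t = st)) as [E|Hne]; [rewrite E; auto|].
  destruct (Hleft t Ht st (ex_intro _ eps (conj He Hst)) Hne) as (E1 & E2 & E3).
  auto.
Qed.

End Run.

(* The body of [train_motion] with its local [inr] named: [len = Some k] means that the
   significant moments are [ts 0 .. ts k].  For the j-th train, [ts (3j+1)], [ts (3j+2)] and
   [ts (3j+3)] are its arrival, its entry into the crossing and its exit. *)
Definition in_range (len : option nat) (i : nat) : Prop :=
  match len with None => True | Some k => (i <= k)%nat end.

Definition significant_moments {T : Type} (dmin dmax : R) (rho : R -> State T) (x : T)
    (ts : nat -> R) (len : option nat) : Prop :=
  ts 0%nat = 0
  /\ (forall i, in_range len (S i) -> ts i < ts (S i))
  /\ (forall i, in_range len (3 * i + 1)%nat ->
        forall t, ts (3 * i)%nat <= t < ts (3 * i + 1)%nat -> TrackStatus (rho t) x = empty)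
  /\ (forall i, in_range len (3 * i + 2)%nat ->
        (forall t, ts (3 * i + 1)%nat <= t < ts (3 * i + 2)%nat -> TrackStatus (rho t) x = coming)
        /\ dmin <= ts (3 * i + 2)%nat - ts (3 * i + 1)%nat <= dmax)
  /\ (forall i, in_range len (3 * i + 3)%nat ->
        forall t, ts (3 * i + 2)%nat <= t < ts (3 * i + 3)%nat ->
          TrackStatus (rho t) x = incrossing)
  /\ (forall k, len = Some k ->
        (exists m, k = (3 * m)%nat) /\ forall t, ts k <= t -> TrackStatus (rho t) x = empty).

Lemma train_motion_moments {T : Type} dmin dmax (rho : R -> State T) x :
  train_motion dmin dmax rho x -> exists ts len, significant_moments dmin dmax rho x ts len.
Proof. intros (ts & len & H). exists ts, len. exact H. Qed.

Lemma in_range_le len m n : (n <= m)%nat -> in_range len m -> in_range len n.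
Proof. destruct len; simpl; lia. Qed.

Lemma nat_mod3_cases i : exists j, i = (3 * j)%nat \/ i = (3 * j + 1)%nat \/ i = (3 * j + 2)%nat.
Proof.
  induction i as [|i [j [->|[->| ->]]]]; [exists 0%nat | exists j | exists j | exists (S j)]; lia.
Qed.

Section Moments.
Context {T : Type} (dmin dmax : R) (rho : R -> State T) (x : T) (ts : nat -> R)
  (len : option nat) (HM : significant_moments dmin dmax rho x ts len).

Lemma moments_lt m n : (n < m)%nat -> in_range len m -> ts n < ts m.
Proof.
  destruct HM as (_ & Hinc & _).
  induction m as [|m IH]; intros Hn Hm; [lia|].
  pose proof (Hinc m Hm).
  destruct (Nat.eq_dec n m) as [->|]; [assumption|].
  enough (ts n < ts m) by lra.
  apply IH; [lia|exact (in_range_le len (S m) m ltac:(lia) Hm)].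
Qed.

Lemma moments_nonneg i : in_range len i -> 0 <= ts i.
Proof.
  destruct HM as (H0 & _). intros Hi. destruct i as [|i]; [lra|].
  pose proof (moments_lt (S i) 0 ltac:(lia) Hi). lra.
Qed.

Lemma moments_inj n m : in_range len n -> in_range len m -> ts n = ts m -> n = m.
Proof.
  intros Hn Hm E. destruct (Nat.lt_total n m) as [H|[H|H]]; [|exact H|].
  - pose proof (moments_lt m n H Hm); lra.
  - pose proof (moments_lt n m H Hn); lra.
Qed.

Lemma in_range_exit j : in_range len (3 * j + 2)%nat -> in_range len (3 * j + 3)%nat.
Proof.
  destruct HM as (_ & _ & _ & _ & _ & Hend).
  destruct len as [k|]; simpl; [|auto]. intros Hk.
  destruct (Hend k eq_refl) as [[m ->] _]. lia.
Qed.

Lemma incrossing_at_entry j :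
  in_range len (3 * j + 3)%nat -> TrackStatus (rho (ts (3 * j + 2)%nat)) x = incrossing.
Proof.
  destruct HM as (_ & Hinc & _ & _ & Hcross & _). intros Hj.
  apply (Hcross j Hj). split; [lra|].
  replace (3 * j + 3)%nat with (S (3 * j + 2)) in * by lia. exact (Hinc _ Hj).
Qed.

Lemma empty_after_exit j : in_range len (3 * j + 3)%nat ->
  exists e, 0 < e /\
    forall u, ts (3 * j + 3)%nat <= u < ts (3 * j + 3)%nat + e -> TrackStatus (rho u) x = empty.
Proof.
  destruct HM as (_ & Hinc & Hempty & _ & _ & Hend). intros Hj.
  destruct (classic (in_range len (3 * j + 4)%nat)) as [Hj4|Hj4].
  - exists (ts (3 * j + 4)%nat - ts (3 * j + 3)%nat). split.
    + pose proof (Hinc (3 * j + 3)%nat) as Hnext.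
      replace (S (3 * j + 3)) with (3 * j + 4)%nat in Hnext by lia. specialize (Hnext Hj4); lra.
    + intros u Hu. specialize (Hempty (S j)).
      replace (3 * S j)%nat with (3 * j + 3)%nat in Hempty by lia.
      replace (3 * j + 3 + 1)%nat with (3 * j + 4)%nat in Hempty by lia.
      apply Hempty; [exact Hj4|lra].
  - destruct len as [k|]; simpl in Hj, Hj4; [|contradiction].
    replace k with (3 * j + 3)%nat in Hend by lia.
    exists 1; split; [lra|]. intros u Hu. apply (proj2 (Hend _ eq_refl)); lra.
Qed.

Hypothesis Hdmin : 0 < dmin.

(* Each arrival-to-arrival cycle lasts at least dmin. *)
Lemma moments_unbounded : len = None -> forall m, INR m * dmin <= ts (3 * m)%nat.
Proof.
  destruct HM as (H0 & Hinc & _ & Hcoming & _). intros ->.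
  induction m as [|m IH]; [simpl; rewrite H0; lra|].
  rewrite S_INR. replace (3 * S m)%nat with (S (3 * m + 2)) by lia.
  pose proof (Hinc (3 * m + 2)%nat I). pose proof (proj2 (Hcoming m I)).
  pose proof (Hinc (3 * m)%nat I). replace (S (3 * m)) with (3 * m + 1)%nat in * by lia.
  lra.
Qed.

Lemma moments_bracket t : 0 <= t ->
  (exists i, in_range len (S i) /\ ts i <= t < ts (S i))
  \/ (exists k, len = Some k /\ ts k <= t).
Proof.
  intros Ht. pose proof HM as (H0 & _). pose proof moments_unbounded as Hunb.
  destruct len as [k|].
  - destruct (Rlt_or_le t (ts k)) as [Htk|Htk]; [left|right; exists k; auto].
    destruct (seq_bracket_le_lt ts t k) as [i [Hi Hti]]; [lra|].
    exists i; simpl; split; [lia|exact Hti].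
  - left. destruct (archimed (t / dmin)) as [Hup _].
    assert (Hpos : 0 <= t / dmin) by (apply Rle_mult_inv_pos; lra).
    set (m := Z.to_nat (up (t / dmin))).
    assert (Hm : INR m = IZR (up (t / dmin))).
    { unfold m. rewrite INR_IZR_INZ, Znat.Z2Nat.id; [reflexivity|].
      apply le_IZR. lra. }
    assert (Htm : t < INR m * dmin).
    { rewrite Hm. apply (Rmult_lt_compat_r dmin) in Hup; [|lra].
      unfold Rdiv in Hup. rewrite Rmult_assoc, Rinv_l in Hup; lra. }
    pose proof (Hunb eq_refl m).
    destruct (seq_bracket_le_lt ts t (3 * m)) as [i [_ Hti]]; [lra|].
    exists i. split; [exact I|exact Hti].
Qed.

Lemma coming_phase t : 0 <= t -> TrackStatus (rho t) x = coming ->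
  exists j, in_range len (3 * j + 2)%nat /\ ts (3 * j + 1)%nat <= t < ts (3 * j + 2)%nat.
Proof.
  pose proof HM as (_ & _ & Hempty & Hcoming & Hcross & Hend). intros Ht Hc.
  destruct (moments_bracket t Ht) as [[i [Hi Hti]]|[k [Hk Htk]]].
  - destruct (nat_mod3_cases i) as [j [->|[->| ->]]].
    + replace (S (3 * j)) with (3 * j + 1)%nat in * by lia.
      rewrite (Hempty j Hi t Hti) in Hc; discriminate.
    + replace (S (3 * j + 1)) with (3 * j + 2)%nat in * by lia. eauto.
    + replace (S (3 * j + 2)) with (3 * j + 3)%nat in * by lia.
      rewrite (Hcross j Hi t Hti) in Hc; discriminate.
  - rewrite (proj2 (Hend k Hk) t Htk) in Hc; discriminate.
Qed.

End Moments.

Definition quiescent {T : Type} (dopen t : R) (st : State T) : Prop :=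
  (forall y, TrackStatus st y = coming -> Deadline st y <> Inf)
  /\ (forall y, TrackStatus st y = empty -> Deadline st y = Inf)
  /\ (Dir st = DClose -> ~ SafeToOpen dopen t st).

Section Controller.
Context {T : Type} (dclose dopen dmin : R).

(* The only possible clash is SignalClose against SignalOpen on Dir. *)
Lemma ctrl_updates_consistent t (st : State T) :
  (forall y, Deadline st y <> Fin t) -> consistent (ctrl_updates dclose dopen dmin t st).
Proof.
  intros Hdue. unfold consistent, ctrl_updates. split; [|split].
  - intros y v v' H1 H2.
    destruct H1 as [(z & A1 & A2 & E)|[(z & A1 & E)|[(z & A1 & A2 & E)|(A1 & A2 & E)]]];
      try discriminate;
    destruct H2 as [(z' & B1 & B2 & E')|[(z' & B1 & E')|[(z' & B1 & B2 & E')|(B1 & B2 & E')]]];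
      try discriminate;
    inversion E; inversion E'; subst; congruence.
  - intros d d' H1 H2.
    destruct H1 as [(z & A1 & A2 & E)|[(z & A1 & E)|[(z & A1 & A2 & E)|(A1 & A2 & E)]]];
      try discriminate; [exfalso; exact (Hdue z A1)|];
    destruct H2 as [(z' & B1 & B2 & E')|[(z' & B1 & E')|[(z' & B1 & B2 & E')|(B1 & B2 & E')]]];
      try discriminate; [exfalso; exact (Hdue z' B1)|];
    inversion E; inversion E'; subst; congruence.
  - intros g g' H1 H2.
    destruct H1 as [(z & A1 & A2 & E)|[(z & A1 & E)|[(z & A1 & A2 & E)|(A1 & A2 & E)]]];
      discriminate.
Qed.

Lemma disabled_quiescent t (st : State T) :
  (forall y, Deadline st y <> Fin t) -> ~ enabled dclose dopen dmin Controller t st ->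
  quiescent dopen t st.
Proof.
  intros Hdue Hdis.
  assert (Hchange : forall u, ctrl_updates dclose dopen dmin t st u ->
    match u with
    | UDeadline y v => Deadline st y = v
    | UDir d => Dir st = d
    | UGate g => GateStatus st = g
    end).
  { intros u Hu. apply NNPP; intro Hne. apply Hdis.
    split; [exact (ctrl_updates_consistent t st Hdue)|]. exists u. split; [exact Hu|].
    destruct u; exact Hne. }
  split; [|split].
  - intros y Hy Hinf.
    enough (Deadline st y = Fin (t + W dclose dmin)) by congruence.
    apply (Hchange (UDeadline y _)). left. exists y. auto.
  - intros y Hy. destruct (Deadline st y) as [r|] eqn:E; [|reflexivity].
    rewrite <- E. apply (Hchange (UDeadline y Inf)).
    right; right; left. exists y. rewrite E. simpl. auto.
  - intros Hd Hsafe.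
    enough (Dir st = DOpen) by congruence.
    apply (Hchange (UDir DOpen)). right; right; right. auto.
Qed.

End Controller.

Section Quiescence.
Context {T : Type} (dclose dopen dmin : R) (rho : R -> State T) (fires : R -> Agent -> Prop)
  (HT : finite_universe T) (Hrun : is_run dclose dopen dmin rho fires)
  (Himm : immediate dclose dopen dmin rho fires Controller).

(* Controller is immediate, so it is disabled wherever rho does not change; choosing the point
   off the finitely many deadline values rules out the SignalClose/SignalOpen clash. *)
Lemma run_quiescent_point a b st : 0 <= a < b -> (forall u, a < u < b -> rho u = st) ->
  exists u, a < u < b /\ quiescent dopen u st.
Proof.
  intros Hab Hst. destruct HT as [l Hl].
  set (f := fun y => match Deadline st y with Fin r => r | Inf => 0 end).
  destruct (exists_not_In_between (map f l) a b ltac:(lra)) as [u [Hu Hn]].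
  exists u. split; [exact Hu|].
  assert (Hdue : forall y, Deadline st y <> Fin u).
  { intros y E. apply Hn. replace u with (f y) by (unfold f; rewrite E; reflexivity).
    apply in_map, Hl. }
  apply (disabled_quiescent dclose dopen dmin u st Hdue). intros Hen.
  assert (Hfire : fires u Controller) by (apply Himm; [lra|rewrite (Hst u Hu); exact Hen]).
  assert (Hlim : right_lim rho u st).
  { exists (b - u). split; [lra|]. intros v Hv. apply Hst; lra. }
  destruct Hrun as (_ & Hright & _).
  exact (proj2 (Hright u ltac:(lra) st Hlim) (eq_sym (Hst u Hu)) Controller Hfire).
Qed.

End Quiescence.

Definition deadline_spec (w : R) (ts : nat -> R) (len : option nat) (t : R) (dl : ExtR) : Prop :=
  match dl with
  | Inf => forall j, in_range len (3 * j + 2)%nat ->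
           ~ (ts (3 * j + 1)%nat < t <= ts (3 * j + 2)%nat)
  | Fin d => exists j, in_range len (3 * j + 3)%nat
             /\ ts (3 * j + 1)%nat < t <= ts (3 * j + 3)%nat /\ d = ts (3 * j + 1)%nat + w
  end.

Section DeadlineInvariant.
Context {T : Type} (dclose dopen dmin dmax : R) (rho : R -> State T) (fires : R -> Agent -> Prop)
  (HT : finite_universe T) (Hrun : is_run dclose dopen dmin rho fires)
  (Himm : immediate dclose dopen dmin rho fires Controller) (Hdmin : 0 < dmin)
  (x : T) (ts : nat -> R) (len : option nat) (HM : significant_moments dmin dmax rho x ts len).

Let spec := deadline_spec (W dclose dmin) ts len.

Lemma deadline_spec_initial : initial (rho 0) -> spec 0 (Deadline (rho 0) x).
Proof.
  intros Hinit. destruct (Hinit x) as [_ ->]. unfold spec, deadline_spec. intros j Hj [Hlt _].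
  pose proof (moments_nonneg dmin dmax rho x ts len HM (3 * j + 1)%nat
                (in_range_le len (3 * j + 2)%nat (3 * j + 1)%nat ltac:(lia) Hj)).
  lra.
Qed.

(* A finite deadline lives through the arrival-to-exit window of a single train: it is set at
   the arrival and, the track being empty right after the exit, cleared there. *)
Lemma deadline_fin_right s st d : 0 <= s -> right_lim rho s st ->
  spec s (Deadline (rho s) x) -> Deadline st x = Fin d ->
  exists j, in_range len (3 * j + 3)%nat
    /\ ts (3 * j + 1)%nat <= s < ts (3 * j + 3)%nat /\ d = ts (3 * j + 1)%nat + W dclose dmin.
Proof.
  intros Hs Hlim Hspec Hd.
  destruct (deadline_step dclose dopen dmin rho fires Hrun s st x Hs Hlim)
    as [E|[(E & Hc & Hinf)|E]]; rewrite Hd in E.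
  - rewrite <- E in Hspec. destruct Hspec as (j & Hj & [h1 h2] & Hdj).
    exists j. split; [exact Hj|]. split; [|exact Hdj]. split; [lra|].
    apply Rnot_le_lt; intros Hexit.
    destruct (empty_after_exit dmin dmax rho x ts len HM j Hj) as (e & He & Hempty).
    destruct Hlim as (eps & Heps & Hst).
    destruct (exists_pos_le_min eps e Heps He) as (e' & He' & He'1 & He'2).
    destruct (run_quiescent_point dclose dopen dmin rho fires HT Hrun Himm s (s + e') st)
      as (u & Hu & _ & Hq & _); [lra|intros u Hu; apply Hst; lra|].
    assert (Hx : TrackStatus st x = empty) by (rewrite <- (Hst u ltac:(lra)); apply Hempty; lra).
    rewrite (Hq x Hx) in Hd. discriminate.
  - injection E as ->. rewrite Hinf in Hspec.
    destruct (coming_phase dmin dmax rho x ts len HM Hdmin s Hs Hc) as (j & Hj & h1 & h2).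
    assert (Harr : s = ts (3 * j + 1)%nat).
    { destruct (Req_dec s (ts (3 * j + 1)%nat)) as [|Hne]; [assumption|].
      exfalso; apply (Hspec j Hj); lra. }
    pose proof (in_range_exit dmin dmax rho x ts len HM j Hj) as Hj3.
    pose proof (moments_lt dmin dmax rho x ts len HM (3 * j + 3)%nat (3 * j + 2)%nat
                  ltac:(lia) Hj3).
    exists j. split; [exact Hj3|]. split; [lra|]. rewrite Harr. reflexivity.
  - discriminate.
Qed.

Lemma deadline_spec_right s : 0 <= s -> spec s (Deadline (rho s) x) ->
  exists e, 0 < e /\ forall u, s < u < s + e -> spec u (Deadline (rho u) x).
Proof.
  intros Hs Hspec.
  destruct (pre_run_right_lim rho (proj1 Hrun) s Hs) as [st Hlim].
  pose proof Hlim as (eps & Heps & Hst).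
  destruct (Deadline st x) as [d|] eqn:Ed.
  - destruct (deadline_fin_right s st d Hs Hlim Hspec Ed) as (j & Hj & [h1 h2] & ->).
    destruct (exists_pos_le_min eps (ts (3 * j + 3)%nat - s) Heps ltac:(lra))
      as (e & He & He1 & He2).
    exists e. split; [exact He|]. intros u Hu. rewrite (Hst u ltac:(lra)), Ed.
    exists j. split; [exact Hj|]. split; [lra|reflexivity].
  - destruct (run_quiescent_point dclose dopen dmin rho fires HT Hrun Himm s (s + eps) st)
      as (u0 & _ & Hq & _); [lra|exact Hst|].
    assert (Hnc : TrackStatus st x <> coming) by (intros Hc; exact (Hq x Hc Ed)).
    exists eps. split; [exact Heps|]. intros u Hu. rewrite (Hst u Hu), Ed.
    intros j Hj [h1 h2].
    destruct (exists_between_max s (ts (3 * j + 1)%nat) u ltac:(lra) h1) as (v & Hv & Hv1).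
    apply Hnc. rewrite <- (Hst v ltac:(lra)).
    destruct HM as (_ & _ & _ & Hcoming & _). apply (proj1 (Hcoming j Hj)). lra.
Qed.

Lemma deadline_spec_left s : 0 < s -> (forall u, 0 <= u < s -> spec u (Deadline (rho u) x)) ->
  spec s (Deadline (rho s) x).
Proof.
  intros Hs Hbelow.
  assert (Hpt : forall a, 0 <= a < s -> exists v, a < v < s /\ spec v (Deadline (rho s) x)).
  { intros a Ha.
    destruct (run_internal_left_point dclose dopen dmin rho fires Hrun a s Hs ltac:(lra))
      as (v & Hv & Ed & _).
    exists v. split; [exact Hv|]. rewrite <- Ed. apply Hbelow; lra. }
  pose proof (moments_nonneg dmin dmax rho x ts len HM) as Hnn.
  destruct (Deadline (rho s) x) as [d|] eqn:Ed.
  - destruct (Hpt 0 ltac:(lra)) as (v & Hv & (j & Hj & [h1 h2] & Hd)).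
    exists j. split; [exact Hj|]. split; [|exact Hd]. split; [lra|].
    apply Rnot_lt_le; intros Hexit.
    destruct (Hpt (ts (3 * j + 3)%nat) ltac:(split; [apply Hnn, Hj|lra]))
      as (v' & Hv' & (j' & Hj' & [h1' h2'] & Hd')).
    assert (Hjj : (3 * j' + 1)%nat = (3 * j + 1)%nat).
    { apply (moments_inj dmin dmax rho x ts len HM);
        [apply (in_range_le len (3 * j' + 3)%nat); [lia|exact Hj']
        |apply (in_range_le len (3 * j + 3)%nat); [lia|exact Hj]|lra]. }
    replace j' with j in * by lia. lra.
  - intros j Hj [h1 h2].
    assert (Hj1 : in_range len (3 * j + 1)%nat)
      by exact (in_range_le len (3 * j + 2)%nat (3 * j + 1)%nat ltac:(lia) Hj).
    destruct (Hpt (ts (3 * j + 1)%nat) ltac:(split; [apply Hnn, Hj1|lra])) as (v & Hv & Hspec).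
    exact (Hspec j Hj ltac:(lra)).
Qed.

Lemma deadline_spec_holds : initial (rho 0) ->
  forall t, 0 <= t -> spec t (Deadline (rho t) x).
Proof.
  intros Hinit t Ht.
  apply (interval_induction (fun u => spec u (Deadline (rho u) x)) 0 t); [lra| | | |lra].
  - exact (deadline_spec_initial Hinit).
  - intros s [Hs _]. exact (deadline_spec_right s Hs).
  - intros s [Hs _]. exact (deadline_spec_left s Hs).
Qed.

End DeadlineInvariant.

Section Crossing.
Context {T : Type} (dclose dopen dmin dmax : R) (rho : R -> State T) (fires : R -> Agent -> Prop)
  (HT : finite_universe T) (Hrun : is_run dclose dopen dmin rho fires)
  (Hinit : initial (rho 0)) (Hmot : forall x, train_motion dmin dmax rho x)
  (Himm : immediate dclose dopen dmin rho fires Controller)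
  (Hdmin : 0 < dmin) (Hdopen : 0 < dopen) (HDelta : 0 <= Delta_close dclose dmin dmax)
  (alpha beta : R) (Halpha : 0 <= alpha)
  (Hgap : alpha + dopen < beta - Delta_close dclose dmin dmax)
  (Hnoc : forall x t, alpha < t < beta -> TrackStatus (rho t) x <> incrossing).

Lemma entry_after_window x ts len j u : significant_moments dmin dmax rho x ts len ->
  in_range len (3 * j + 3)%nat -> ts (3 * j + 1)%nat < u <= ts (3 * j + 3)%nat ->
  alpha < u < beta -> beta <= ts (3 * j + 2)%nat.
Proof.
  intros HM Hj [h1 h3] Hu. pose proof HM as (_ & _ & _ & _ & Hcross & _).
  apply Rnot_lt_le; intros Hentry.
  destruct (Rlt_or_le alpha (ts (3 * j + 2)%nat)) as [Hlate|Hearly].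
  - apply (Hnoc x (ts (3 * j + 2)%nat)); [lra|].
    exact (incrossing_at_entry dmin dmax rho x ts len HM j Hj).
  - apply (Hnoc x ((alpha + u) / 2)); [lra|].
    apply (Hcross j Hj). lra.
Qed.

(* d = arrival + W >= entry - dmax + W >= beta - dmax + W = beta - Delta_close. *)
Lemma deadline_lower_bound x u d : alpha < u < beta -> Deadline (rho u) x = Fin d ->
  beta - Delta_close dclose dmin dmax <= d.
Proof.
  intros Hu Hd.
  destruct (train_motion_moments dmin dmax rho x (Hmot x)) as (ts & len & HM).
  pose proof (deadline_spec_holds dclose dopen dmin dmax rho fires HT Hrun Himm Hdmin x ts len HM
                Hinit u ltac:(lra)) as Hspec.
  rewrite Hd in Hspec. destruct Hspec as (j & Hj & Hwin & ->).
  pose proof (entry_after_window x ts len j u HM Hj Hwin Hu).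
  pose proof HM as (_ & _ & _ & Hcoming & _).
  destruct (Hcoming j (in_range_le len (3 * j + 3)%nat (3 * j + 2)%nat ltac:(lia) Hj)) as [_ Hdur].
  unfold W, Delta_close. lra.
Qed.

Lemma safe_to_open_early u st : alpha < u -> u + dopen < beta - Delta_close dclose dmin dmax ->
  rho u = st -> quiescent dopen u st -> SafeToOpen dopen u st.
Proof.
  intros Hu Hgu Hst (Hq & _ & _) y. unfold s_cond.
  destruct (TrackStatus st y) eqn:Ey; [left; reflexivity| |].
  - right. destruct (Deadline st y) as [d|] eqn:Ed; [|exact I].
    rewrite <- Hst in Ed. pose proof (deadline_lower_bound y u d ltac:(lra) Ed). simpl. lra.
  - exfalso. apply (Hnoc y u); [lra|]. rewrite Hst. exact Ey.
Qed.

Lemma dir_open_near_alpha : exists e, 0 < e /\ alpha + e <= beta - Delta_close dclose dmin dmax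
  /\ forall u, alpha < u < alpha + e -> Dir (rho u) = DOpen.
Proof.
  destruct (pre_run_right_lim rho (proj1 Hrun) alpha Halpha) as (st & eps & Heps & Hst).
  destruct (exists_pos_le_min eps (beta - Delta_close dclose dmin dmax - dopen - alpha) Heps
              ltac:(lra)) as (e & He & He1 & He2).
  destruct (run_quiescent_point dclose dopen dmin rho fires HT Hrun Himm alpha (alpha + e) st)
    as (u & Hu & Hq); [lra|intros v Hv; apply Hst; lra|].
  assert (Hdir : Dir st = DOpen).
  { destruct (Dir st) eqn:Ed; [reflexivity|exfalso].
    apply (proj2 (proj2 Hq) Ed). apply safe_to_open_early; [lra|lra|apply Hst; lra|exact Hq]. }
  exists e. split; [exact He|]. split; [lra|].
  intros v Hv. rewrite (Hst v ltac:(lra)). exact Hdir.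
Qed.

(* Dir can only turn to close through SignalClose, i.e. at a moment equal to a deadline, and all
   deadlines present in the window lie beyond beta - Delta_close. *)
Lemma dir_open_in_window t : alpha < t <= beta - Delta_close dclose dmin dmax ->
  Dir (rho t) = DOpen.
Proof.
  intros Ht. destruct dir_open_near_alpha as (e & He & Hle & Hnear).
  destruct (Rlt_or_le t (alpha + e)) as [Hlt|Hge]; [apply Hnear; lra|].
  apply (interval_induction (fun u => Dir (rho u) = DOpen) (alpha + e / 2)
           (beta - Delta_close dclose dmin dmax)); [lra|apply Hnear; lra| | |lra].
  - intros s [Hs1 Hs2] Hq.
    destruct (pre_run_right_lim rho (proj1 Hrun) s ltac:(lra)) as [st Hlim].
    pose proof Hlim as (eps & Heps & Hst).
    exists eps. split; [exact Heps|]. intros u Hu. rewrite (Hst u Hu).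
    destruct (dir_step dclose dopen dmin rho fires Hrun s st ltac:(lra) Hlim)
      as [E|[E|[y Ey]]]; [congruence|exact E|exfalso].
    pose proof (deadline_lower_bound y s s ltac:(lra) Ey). lra.
  - intros s [Hs1 Hs2] Hbelow.
    destruct (run_internal_left_point dclose dopen dmin rho fires Hrun (alpha + e / 2) s
                ltac:(lra) ltac:(lra)) as (v & Hv & _ & Ed & _).
    rewrite <- Ed. apply Hbelow. lra.
Qed.

Hypothesis Hgate : ~ (exists t, 0 <= t /\ forall u, t < u < t + dopen ->
                       Dir (rho u) = DOpen /\ GateStatus (rho u) = closed).

Lemma gate_opened_in_window t : alpha + dopen <= t <= beta - Delta_close dclose dmin dmax ->
  GateStatus (rho t) = opened.
Proof.
  intros Ht.
  assert (Hg : exists g, alpha < g < alpha + dopen /\ GateStatus (rho g) = opened).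
  { apply NNPP; intros Hn. apply Hgate. exists alpha. split; [exact Halpha|].
    intros u Hu. split; [apply dir_open_in_window; lra|].
    destruct (GateStatus (rho u)) eqn:Eg; [exfalso; eauto|reflexivity]. }
  destruct Hg as (g & Hg & Hgo).
  apply (interval_induction (fun u => GateStatus (rho u) = opened) g
           (beta - Delta_close dclose dmin dmax)); [lra|exact Hgo| | |lra].
  - intros s [Hs1 Hs2] Hq.
    destruct (pre_run_right_lim rho (proj1 Hrun) s ltac:(lra)) as [st Hlim].
    pose proof Hlim as (eps & Heps & Hst).
    exists eps. split; [exact Heps|]. intros u Hu. rewrite (Hst u Hu).
    destruct (gate_step dclose dopen dmin rho fires Hrun s st ltac:(lra) Hlim)
      as [E|[[_ E]|[E _]]]; [congruence|exact E|].
    rewrite dir_open_in_window in E; [discriminate|lra].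
  - intros s [Hs1 Hs2] Hbelow.
    destruct (run_internal_left_point dclose dopen dmin rho fires Hrun g s ltac:(lra) ltac:(lra))
      as (v & Hv & _ & _ & Eg).
    rewrite <- Eg. apply Hbelow. lra.
Qed.

End Crossing.

Theorem mainTheorem10 (T : Type) (HT : finite_universe T)
  (dclose dopen dmin dmax : R)
  (Hc : 0 < dclose) (Ho : 0 < dopen) (Hmin : 0 < dmin) (Hmax : 0 < dmax)
  (Hcmin : dclose < dmin) (Hminmax : dmin <= dmax)
  (rho : R -> State T) (fires : R -> Agent -> Prop)
  (Hreg : regular_run dclose dopen dmin dmax rho fires)
  (alpha beta : R) (Ha : 0 <= alpha) (Hab : alpha < beta)
  (Hgap : alpha + dopen < beta - Delta_close dclose dmin dmax)
  (Hnoc : forall x t, alpha < t < beta -> TrackStatus (rho t) x <> incrossing) :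
  forall t, alpha + dopen <= t <= beta - Delta_close dclose dmin dmax ->
    GateStatus (rho t) = opened.
Proof.
  destruct Hreg as (Hrun & Hinit & Hmot & Himm & _ & _ & Hgate).
  assert (HDelta : 0 <= Delta_close dclose dmin dmax) by (unfold Delta_close; lra).
  exact (gate_opened_in_window dclose dopen dmin dmax rho fires HT Hrun Hinit Hmot Himm
           Hmin Ho HDelta alpha beta Ha Hgap Hnoc Hgate).
Qed.
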